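(* Let $(S,\circ)$ be a monoid with identity $e$ and group of units $S^{-1}$. Then: (i) if $x\in S$ is indivisible, then $x$ is a building block of $S$, i.e. $x\in B(S)$; (ii) if $G\subseteq S$ is a generating set of $S$, then $(S^{-1}xS^{-1})\cap G\neq\emptyset$ for every $x\in B(S)$.
   Context: The group of units is $S^{-1}=\{x\in S:\exists y\in S,\ xy=yx=e\}$. An element $x\in S$ is indivisible if for every decomposition $x=yz$ with $y,z\in S$, exactly one of $y,z$ lies in $S^{-1}$. An element $x\in S$ is a building block of $S$ if for every decomposition $x=yz$ with $y,z\in S$ one has $y\in xS^{-1}$ or $z\in S^{-1}x$ (or both); $B(S)$ denotes the set of building blocks. $G\subseteq S$ is a generating set if every element of $S$ is a finite product $g_1\circ\cdots\circ g_m$ ($m\ge1$) of elements of $G$. For subsets, $S^{-1}xS^{-1}=\{uxv:u,v\in S^{-1}\}$. *)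

From Stdlib Require Import List.

Record Monoid := {
  carrier :> Type;
  op : carrier -> carrier -> carrier;
  e : carrier;
  op_assoc : forall x y z, op x (op y z) = op (op x y) z;
  op_e_l : forall x, op e x = x;
  op_e_r : forall x, op x e = x
}.

Section Defs.
Variable S : Monoid.
Local Notation "x * y" := (op S x y).

Definition is_unit (x : S) : Prop := exists y : S, x * y = e S /\ y * x = e S.

Definition indivisible (x : S) : Prop :=
  forall y z : S, x = y * z ->
    (is_unit y /\ ~ is_unit z) \/ (~ is_unit y /\ is_unit z).

Definition building_block (x : S) : Prop :=
  forall y z : S, x = y * z ->
    (exists u, is_unit u /\ y = x * u) \/ (exists u, is_unit u /\ z = u * x).

Definition prod_ne (g : S) (gs : list S) : S := fold_left (fun a b => a * b) gs g.

Definition generating_set (G : S -> Prop) : Prop :=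
  forall s : S, exists (g : S) (gs : list S),
    G g /\ Forall G gs /\ s = prod_ne g gs.
End Defs.

(* An indivisible x = y z has a unit factor, and absorbing that unit into the
   other factor exhibits y in x S^{-1} or z in S^{-1} x.  For (ii), write a
   building block x = g_1 ... g_m over G and split off the last factor:
   x = (g_1 ... g_{m-1}) g_m.  Either g_m = u x with u a unit, and g_m is the
   required generator, or g_1 ... g_{m-1} = x u, which is again a building
   block (building blocks are stable under multiplication by units), and
   induction on m applies. *)
From Stdlib Require Import List.

Section BuildingBlocks.
Variable S : Monoid.
Local Notation "x * y" := (op S x y).

Lemma is_unit_e : is_unit S (e S).
Proof. exists (e S). rewrite op_e_l. auto. Qed.

Lemma is_unit_mul (a b : S) : is_unit S a -> is_unit S b -> is_unit S (a * b).
Proof.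
  intros [a' [Haa' Ha'a]] [b' [Hbb' Hb'b]]. exists (b' * a'). split.
  - rewrite <- op_assoc, (op_assoc S b b' a'), Hbb', op_e_l; exact Haa'.
  - rewrite <- op_assoc, (op_assoc S a' a b), Ha'a, op_e_l; exact Hb'b.
Qed.

Lemma indivisible_building_block (x : S) : indivisible S x -> building_block S x.
Proof.
  intros Hx y z Hyz.
  destruct (Hx y z Hyz) as [[[w [Hyw Hwy]] _] | [_ [w [Hzw Hwz]]]].
  - right. exists w. split; [exists y; auto |].
    rewrite Hyz, op_assoc, Hwy, op_e_l; reflexivity.
  - left. exists w. split; [exists z; auto |].
    rewrite Hyz, <- op_assoc, Hzw, op_e_r; reflexivity.
Qed.

Lemma building_block_mulr (x u : S) :
  building_block S x -> is_unit S u -> building_block S (x * u).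
Proof.
  intros Hx [w [Huw Hwu]] y z Hyz.
  assert (Hx_yzw : x = y * (z * w)).
  { rewrite op_assoc, <- Hyz, <- op_assoc, Huw, op_e_r; reflexivity. }
  destruct (Hx _ _ Hx_yzw) as [[a [Ha Hy]] | [a [Ha Hzw]]].
  - left. exists (w * a). split.
    + apply is_unit_mul; [exists u; auto | exact Ha].
    + rewrite Hy, <- op_assoc, (op_assoc S u w a), Huw, op_e_l; reflexivity.
  - right. exists a. split; [exact Ha |].
    rewrite op_assoc, <- Hzw, <- op_assoc, Hwu, op_e_r; reflexivity.
Qed.

Lemma prod_ne_rcons (g a : S) (gs : list S) :
  prod_ne S g (gs ++ a :: nil) = prod_ne S g gs * a.
Proof. unfold prod_ne. rewrite fold_left_app. reflexivity. Qed.

Lemma building_block_prod_ne (g : S) (gs : list S) (x : S) :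
  building_block S x -> x = prod_ne S g gs ->
  exists u v, is_unit S u /\ is_unit S v /\ In (u * x * v) (g :: gs).
Proof.
  revert x. induction gs as [| a gs IH] using rev_ind; intros x Hx Hxg.
  - exists (e S), (e S). rewrite op_e_l, op_e_r, Hxg.
    repeat split; try apply is_unit_e. now left.
  - rewrite prod_ne_rcons in Hxg.
    destruct (Hx _ _ Hxg) as [[u [Hu Hp]] | [u [Hu Ha]]].
    + destruct (IH (x * u) (building_block_mulr x u Hx Hu) (eq_sym Hp))
        as [u' [v' [Hu' [Hv' Hin]]]].
      exists u', (u * v'). repeat split; [exact Hu' | now apply is_unit_mul |].
      rewrite app_comm_cons. apply in_or_app. left.
      rewrite op_assoc, <- (op_assoc S u' x u). exact Hin.
    + exists u, (e S). repeat split; [exact Hu | apply is_unit_e |].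
      rewrite op_e_r, <- Ha, app_comm_cons. apply in_or_app. right. now left.
Qed.

End BuildingBlocks.

Theorem lemma1 (S : Monoid) :
  (forall x : S, indivisible S x -> building_block S x) /\
  (forall G : S -> Prop, generating_set S G ->
     forall x : S, building_block S x ->
       exists u v : S, is_unit S u /\ is_unit S v /\ G (op S (op S u x) v)).
Proof.
  split; [exact (indivisible_building_block S) |].
  intros G HG x Hx.
  destruct (HG x) as [g [gs [Hg [Hgs Hxg]]]].
  destruct (building_block_prod_ne S g gs x Hx Hxg) as [u [v [Hu [Hv Hin]]]].
  exists u, v. repeat split; [exact Hu | exact Hv |].
  exact (proj1 (Forall_forall G (g :: gs)) (Forall_cons g Hg Hgs) _ Hin).
Qed.
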